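(* Let $G=(V,E)$ be a classical graph with vertex set $V=[n]$ and let $f\colon V \to \mathbb{C}^d$ be an orthogonal representation of $G$. Then the completely positive map $\phi\colon M_n \to M_d$ defined by $\phi(X) = \sum_{i=1}^n |f(i)\rangle\langle e_i| X |e_i\rangle\langle f(i)|$ for all $X\in M_n$ is an orthogonal representation of the quantum graph $\mathcal{S}_G=\operatorname{span}\{|e_i\rangle\langle e_j| : i=j\text{ or } i \text{ adjacent to } j\}$.
   Context: $(|e_k\rangle)$ is the standard basis of $\mathbb{C}^n$. A classical orthogonal representation of $G$ is a map $f\colon V\to\mathbb{C}^d$ such that $f(i)\perp f(j)$ whenever $i\neq j$ and $i,j$ are not adjacent. Elements $a,b$ of a $C^*$-algebra are orthogonal, $a\perp b$, if $ab=ba=a^*b=ab^*=0$. For a quantum graph $\mathcal{S}\subseteq M_n$ (a subspace closed under adjoints containing $I_n$), a completely positive map $\phi\colon M_n\to M_d$ is an orthogonal representation of $\mathcal{S}$ if $\phi(A)\perp\phi(B)$ for all $A,B\in M_n$ with $A\mathcal{S}B=B\mathcal{S}A=A^*\mathcal{S}B=A\mathcal{S}B^*=\{0\}$. *)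

From HB Require Import structures.
From mathcomp Require Import all_boot all_order all_algebra.
Set Implicit Arguments. Unset Strict Implicit. Unset Printing Implicit Defensive.
Import Order.TTheory GRing.Theory Num.Theory.
Local Open Scope ring_scope.

(* Complex scalars: an arbitrary numeric algebraically closed field C
   (with conjugation Num.conj); the complex numbers are an instance. *)

Definition adjmx (C : numClosedFieldType) m n (A : 'M[C]_(m, n)) : 'M[C]_(n, m) :=
  (map_mx Num.conj A)^T.

Definition ket_e (C : numClosedFieldType) n (i : 'I_n) : 'cV[C]_n := delta_mx i 0.

Definition psd_mx (C : numClosedFieldType) m (A : 'M[C]_m) : Prop :=
  exists B : 'M[C]_m, A = adjmx B *m B.

Definition mx_orth (C : numClosedFieldType) d (a b : 'M[C]_d) : Prop :=
  [/\ a *m b = 0, b *m a = 0, adjmx a *m b = 0 & a *m adjmx b = 0].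

Definition mx_linear (C : numClosedFieldType) n d (phi : 'M[C]_n -> 'M[C]_d) : Prop :=
  forall (c : C) (X Y : 'M[C]_n), phi (c *: X + Y) = c *: phi X + phi Y.

(* complete positivity: for every k, id_k (x) phi maps positive elements of
   M_k(M_n) (k x k block matrices with n x n blocks) to positive elements of
   M_k(M_d). *)
Definition completely_positive (C : numClosedFieldType) n d
    (phi : 'M[C]_n -> 'M[C]_d) : Prop :=
  mx_linear phi /\
  forall (k : nat) (X : 'I_k -> 'I_k -> 'M[C]_n),
    psd_mx (@mxblock C k k (fun _ => n) (fun _ => n) X) ->
    psd_mx (@mxblock C k k (fun _ => d) (fun _ => d) (fun a b => phi (X a b))).

Definition classical_orth_rep n d (C : numClosedFieldType) (adj : rel 'I_n)
    (f : 'I_n -> 'cV[C]_d) : Prop :=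
  forall i j : 'I_n, i != j -> ~~ adj i j -> adjmx (f i) *m f j = 0.

(* the quantum graph S_G = span{ |e_i><e_j| : i = j or i ~ j }, as a
   subspace of M_n encoded (via mxvec) in the mxalgebra style *)
Definition SG (C : fieldType) n (adj : rel 'I_n) : 'A[C]_(n ^ 2, n) :=
  (\sum_(ij : 'I_n * 'I_n | (ij.1 == ij.2) || adj ij.1 ij.2)
      <<mxvec (delta_mx ij.1 ij.2 : 'M[C]_n)>>)%MS.

Definition qgraph_orth_rep (C : numClosedFieldType) n d (S : 'A[C]_(n ^ 2, n))
    (phi : 'M[C]_n -> 'M[C]_d) : Prop :=
  completely_positive phi /\
  forall A B : 'M[C]_n,
    (forall X : 'M[C]_n, (X \in S)%MS ->
       [/\ A *m X *m B = 0, B *m X *m A = 0,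
           adjmx A *m X *m B = 0 & A *m X *m adjmx B = 0]) ->
    mx_orth (phi A) (phi B).

(* The map is phi(X) = sum_i X_ii |f i><f i|, a Kraus sum with Kraus operators
   |e_i><f i|, hence completely positive.  If A S_G B = B S_G A = A^* S_G B =
   A S_G B^* = 0, testing against X = |e_i><e_j| for i = j or i ~ j gives
   A_ii B_jj = 0 (and the variants with A, B swapped or conjugated), while for
   distinct non-adjacent i, j the vectors f i and f j are orthogonal.  So every
   term A_ii B_jj |f i><f i|f j><f j| of phi(A) phi(B) vanishes, and likewise
   for the other three products. *)

From HB Require Import structures.
From mathcomp Require Import all_boot all_order all_algebra.
Import Order.TTheory GRing.Theory Num.Theory.
Local Open Scope ring_scope.
Set Implicit Arguments. Unset Strict Implicit.

Section Adjoint.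
Variable C : numClosedFieldType.

Lemma adjmxM m n p (A : 'M[C]_(m, n)) (B : 'M[C]_(n, p)) :
  adjmx (A *m B) = adjmx B *m adjmx A.
Proof. by rewrite /adjmx map_mxM trmx_mul. Qed.

Lemma adjmxK m n (A : 'M[C]_(m, n)) : adjmx (adjmx A) = A.
Proof. by apply/matrixP => i j; rewrite !mxE conjCK. Qed.

Lemma adjmxZ m n a (A : 'M[C]_(m, n)) : adjmx (a *: A) = a^* *: adjmx A.
Proof. by apply/matrixP => i j; rewrite !mxE rmorphM. Qed.

Lemma adjmx0 m n : adjmx (0 : 'M[C]_(m, n)) = 0.
Proof. by apply/matrixP => i j; rewrite !mxE rmorph0. Qed.

Lemma adjmx_sum m n (I : finType) (F : I -> 'M[C]_(m, n)) :
  adjmx (\sum_i F i) = \sum_i adjmx (F i).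
Proof.
apply/matrixP => i j; rewrite !mxE !summxE rmorph_sum.
by apply: eq_bigr => k _; rewrite !mxE.
Qed.

Lemma adjmx_delta m n i j : adjmx (delta_mx i j : 'M[C]_(m, n)) = delta_mx j i.
Proof. by rewrite /adjmx map_delta_mx trmx_delta. Qed.

Lemma adjmx_pid m n r : adjmx (pid_mx r : 'M[C]_(m, n)) = pid_mx r.
Proof.
apply/matrixP => i j; rewrite !mxE rmorph_nat eq_sym.
by case: eqP => // ->.
Qed.

Lemma adjmx_col m1 m2 n (A : 'M[C]_(m1, n)) (B : 'M[C]_(m2, n)) :
  adjmx (col_mx A B) = row_mx (adjmx A) (adjmx B).
Proof. by rewrite /adjmx map_col_mx tr_col_mx. Qed.

Lemma adjmx_mxblock p q (p_ : 'I_p -> nat) (q_ : 'I_q -> nat)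
    (B_ : forall i j, 'M[C]_(p_ i, q_ j)) :
  adjmx (\mxblock_(i, j) B_ i j) = \mxblock_(i, j) adjmx (B_ j i).
Proof. by apply/matrixP => i j; rewrite !mxE. Qed.

End Adjoint.

Section Positivity.
Variable C : numClosedFieldType.

(* [psd_mx] asks for a square factor: a wide [M] is padded with zero rows, a
   tall one is compressed to [Q *m M], where the rows of [Q] are orthonormal
   and span the range of [M] (Gram-Schmidt), so that [Q^* Q M = M]. *)
Lemma psd_mx_gram p m (M : 'M[C]_(p, m)) : psd_mx (adjmx M *m M).
Proof.
case: (leqP m p) => [le_mp | lt_pm].
  set N := adjmx M; have /submxP [X defN] := spectral.schmidt_sub N.
  set Q := spectral.schmidt N in defN.
  have QQ : Q *m adjmx Q = 1%:M.
    rewrite /adjmx map_trmx.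
    by apply/spectral.unitarymxP/spectral.schmidt_unitarymx.
  exists (Q *m M); rewrite adjmxM !mulmxA; congr (_ *m _).
  by rewrite -/N defN -(mulmxA X) QQ mulmx1.
exists (pid_mx p *m M); rewrite adjmxM !mulmxA -(mulmxA _ _ (pid_mx p)).
rewrite adjmx_pid mul_pid_mx minnn (minn_idPr (ltnW lt_pm)) pid_mx_1.
by rewrite mulmx1.
Qed.

Lemma psd_mx0 m : psd_mx (0 : 'M[C]_m).
Proof. by exists 0; rewrite mulmx0. Qed.

Lemma psd_mxD m (A B : 'M[C]_m) : psd_mx A -> psd_mx B -> psd_mx (A + B).
Proof.
move=> [{}A ->] [{}B ->].
by rewrite -mul_row_col -adjmx_col; apply: psd_mx_gram.
Qed.

Lemma psd_mx_sum m (I : finType) (F : I -> 'M[C]_m) :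
  (forall i, psd_mx (F i)) -> psd_mx (\sum_i F i).
Proof.
by move=> psdF; apply: big_ind => //; [apply: psd_mx0 | apply: psd_mxD].
Qed.

Lemma psd_mx_congr m p (X : 'M[C]_m) (D : 'M[C]_(m, p)) :
  psd_mx X -> psd_mx (adjmx D *m X *m D).
Proof.
move=> [B ->]; rewrite !mulmxA -mulmxA -adjmxM; exact: psd_mx_gram.
Qed.

End Positivity.

Section CompletePositivity.
Variable C : numClosedFieldType.

Lemma completely_positive_eq n d (phi psi : 'M[C]_n -> 'M[C]_d) :
  phi =1 psi -> completely_positive phi -> completely_positive psi.
Proof.
move=> eq_phi [lin_phi cp_phi]; split.
  by move=> c X Y; rewrite -!eq_phi.
move=> k X psdX; have := cp_phi k X psdX.
by congr psd_mx; apply: eq_mxblock => a b; rewrite eq_phi.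
Qed.

Lemma mxblock_diag_congr k n d (W : 'M[C]_(n, d))
    (X : 'I_k -> 'I_k -> 'M[C]_n) :
  let D := \mxblock_(a < k, b < k) (if a == b then W else 0) in
  \mxblock_(a < k, b < k) (adjmx W *m X a b *m W) =
  adjmx D *m \mxblock_(a < k, b < k) X a b *m D.
Proof.
move=> D; rewrite /D adjmx_mxblock !mul_mxblock; apply: eq_mxblock => a b.
rewrite (bigD1 b) //= (big1 _ (fun c => c != b)) => [|c /negbTE->]; last first.
  by rewrite mulmx0.
rewrite (bigD1 a) //= (big1 _ (fun c => c != a)) => [|c /negbTE->]; last first.
  by rewrite adjmx0 mul0mx.
by rewrite !eqxx !addr0.
Qed.

Lemma kraus_completely_positive n d (I : finType) (W : I -> 'M[C]_(n, d)) :
  completely_positive (fun X => \sum_i adjmx (W i) *m X *m W i).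
Proof.
split.
  move=> c X Y; rewrite scaler_sumr -big_split /=; apply: eq_bigr => i _.
  by rewrite mulmxDr mulmxDl -scalemxAr !scalemxAl.
move=> k X psdX; rewrite mxblock_sum; apply: psd_mx_sum => i.
by rewrite mxblock_diag_congr; apply: psd_mx_congr.
Qed.

End CompletePositivity.

Section DiagonalMap.
Variables (C : numClosedFieldType) (n d : nat).
Implicit Types (f : 'I_n -> 'cV[C]_d) (a : 'I_n -> C).

Definition outer_sum f a : 'M[C]_d := \sum_i a i *: (f i *m adjmx (f i)).

Lemma ket_e_sandwich (g : 'cV[C]_d) i (Y : 'M[C]_n) :
  (g *m adjmx (ket_e C i)) *m Y *m (ket_e C i *m adjmx g) =
  Y i i *: (g *m adjmx g).
Proof.
rewrite /ket_e adjmx_delta !mulmxA -(mulmxA g) -rowE -(mulmxA _ _ (delta_mx i 0)).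
have -> : row i Y *m delta_mx i 0 = (Y i i)%:M.
  by rewrite -colE; apply/matrixP => x y; rewrite !ord1 !mxE eqxx.
by rewrite mul_mx_scalar scalemxAl.
Qed.

Lemma adjmx_outer_sum f a :
  adjmx (outer_sum f a) = outer_sum f (fun i => (a i)^*).
Proof.
by rewrite adjmx_sum; apply: eq_bigr => i _; rewrite adjmxZ adjmxM adjmxK.
Qed.

Lemma outer_sum_mul_eq0 (adj : rel 'I_n) f a b : classical_orth_rep adj f ->
    (forall i j, (i == j) || adj i j -> a i * b j = 0) ->
  outer_sum f a *m outer_sum f b = 0.
Proof.
move=> orth_f ab0; rewrite mulmx_suml big1 // => i _.
rewrite mulmx_sumr big1 // => j _.
rewrite -scalemxAr -scalemxAl scalerA mulrC.
have [/ab0 -> | ] := boolP ((i == j) || adj i j); first by rewrite scale0r.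
rewrite negb_or => /andP [neq_ij nadj_ij].
by rewrite mulmxA -(mulmxA (f i)) orth_f // mulmx0 mul0mx scaler0.
Qed.

Lemma mulmx_delta_entry (A B : 'M[C]_n) i j :
  (A *m delta_mx i j *m B) i j = A i i * B j j.
Proof.
rewrite -(mul_delta_mx (0 : 'I_1)) !mulmxA -colE -mulmxA -rowE.
by rewrite mxE big_ord1 !mxE.
Qed.

Lemma delta_mx_in_SG (adj : rel 'I_n) i j :
  (i == j) || adj i j -> (delta_mx i j \in SG C adj)%MS.
Proof. by move=> edge_ij; apply: (sumsmx_sup (i, j)); rewrite ?genmxE. Qed.

End DiagonalMap.

Unset Implicit Arguments.

Theorem proposition5p4 (C : numClosedFieldType) (n d : nat) (adj : rel 'I_n)
    (adj_sym : symmetric adj) (adj_irr : irreflexive adj)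
    (f : 'I_n -> 'cV[C]_d) (hf : classical_orth_rep adj f) :
  qgraph_orth_rep (SG C adj)
    (fun X : 'M[C]_n =>
       \sum_(i < n) (f i *m adjmx (ket_e C i)) *m X *m (ket_e C i *m adjmx (f i))).
Proof.
split.
  pose W i := ket_e C i *m adjmx (f i).
  apply: (completely_positive_eq _ (kraus_completely_positive W)) => Y.
  by apply: eq_bigr => i _; rewrite adjmxM adjmxK.
move=> A B orthAB.
have phiE (Y : 'M[C]_n) :
    \sum_(i < n) (f i *m adjmx (ket_e C i)) *m Y *m (ket_e C i *m adjmx (f i))
    = outer_sum f (fun i => Y i i).
  by apply: eq_bigr => i _; rewrite ket_e_sandwich.
have entries_eq0 i j : (i == j) || adj i j ->
    [/\ A i i * B j j = 0, B i i * A j j = 0, (A i i)^* * B j j = 0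
      & A i i * (B j j)^* = 0].
  move=> /(delta_mx_in_SG C) /orthAB [AB BA AsB ABs].
  have adjmx_ii (M : 'M[C]_n) k : adjmx M k k = (M k k)^* by rewrite !mxE.
  by rewrite -!adjmx_ii -!mulmx_delta_entry AB BA AsB ABs !mxE.
rewrite /mx_orth !phiE !adjmx_outer_sum.
by split; apply: (outer_sum_mul_eq0 hf) => i j /entries_eq0 [].
Qed.
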